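(* Let $G$ be a group and $S\subseteq G$ a conjugation invariant generating set of $G$. Suppose there exist homogeneous quasi-morphisms $q_1,\dots,q_m:G\to\mathbb{R}$ which are linearly independent (as elements of the real vector space of functions $G\to\mathbb R$) and each of which is bounded on $S$. Then there is a quasi-isometric embedding of $\mathbb{Z}^m$ into $\mathrm{Cay}(G,S)$.
   Context: A quasi-morphism is a function $q:G\to\mathbb{R}$ with $\sup_{g,h\in G}|q(gh)-q(g)-q(h)|<\infty$ (this supremum is the defect); it is homogeneous if $q(g^k)=kq(g)$ for all $g\in G$, $k\in\mathbb{Z}$. $S$ is conjugation invariant if $gsg^{-1}\in S$ for all $g\in G$, $s\in S$. $\mathrm{Cay}(G,S)$ is the graph with vertex set $G$ and an (undirected) edge between $g$ and $sg$ for every $g\in G$, $s\in S$, with the path metric in which edges have length $1$. $\mathbb{Z}^m$ carries the $\ell^1$ metric. A map $f$ between metric spaces is a quasi-isometric embedding if there are $K\ge1,C\ge0$ with $\frac1K d(x,y)-C\le d(f(x),f(y))\le Kd(x,y)+C$. *)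

From HB Require Import structures.
From mathcomp Require Import all_boot all_order all_algebra.
From mathcomp Require Import Rstruct.
Set Implicit Arguments. Unset Strict Implicit. Unset Printing Implicit Defensive.
Import Order.TTheory GRing.Theory Num.Theory.
Local Open Scope ring_scope.

Record group := Group {
  gcar :> Type;
  gmul : gcar -> gcar -> gcar;
  gone : gcar;
  ginv : gcar -> gcar;
  gmulA : forall x y z, gmul x (gmul y z) = gmul (gmul x y) z;
  gmul1g : forall x, gmul gone x = x;
  gmulg1 : forall x, gmul x gone = x;
  gmulVg : forall x, gmul (ginv x) x = gone;
  gmulgV : forall x, gmul x (ginv x) = gone }.

Section GroupDefs.
Variable G : group.

Definition gpown (g : G) (n : nat) : G := iter n (gmul g) (gone G).
Definition gpowz (g : G) (k : int) : G :=
  match k with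
  | Posz n => gpown g n
  | Negz n => ginv (gpown g n.+1)
  end.

Definition quasi_morphism (q : G -> Rdefinitions.R) : Prop :=
  exists D : Rdefinitions.R, forall g h : G, `|q (gmul g h) - q g - q h| <= D.

Definition homogeneous (q : G -> Rdefinitions.R) : Prop :=
  forall (g : G) (k : int), q (gpowz g k) = k%:~R * q g.

Definition conj_invariant (S : G -> Prop) : Prop :=
  forall g s : G, S s -> S (gmul (gmul g s) (ginv g)).

(* walk n g h : there is an edge path of length n in Cay(G,S) from g to h;
   edges join x and s*x for s in S (traversed both ways). *)
Inductive walk (S : G -> Prop) : nat -> G -> G -> Prop :=
  | walk0 : forall g, walk S 0 g g
  | walkF : forall n g h s, walk S n g h -> S s -> walk S n.+1 g (gmul s h)
  | walkB : forall n g h s, walk S n g h -> S s -> walk S n.+1 g (gmul (ginv s) h).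

Definition generates (S : G -> Prop) : Prop :=
  forall g : G, exists n, walk S n (gone G) g.

Definition cay_dist (S : G -> Prop) (g h : G) (n : nat) : Prop :=
  walk S n g h /\ forall k, walk S k g h -> (n <= k)%N.

End GroupDefs.

Definition l1_dist (m : nat) (x y : 'I_m -> int) : nat :=
  (\sum_(i < m) `|x i - y i|%N)%N.

Definition linearly_independent (X : Type) (m : nat) (q : 'I_m -> X -> Rdefinitions.R) : Prop :=
  forall c : 'I_m -> Rdefinitions.R,
    (forall x : X, \sum_(i < m) c i * q i x = 0) -> forall i, c i = 0.

Definition qi_embedding (G : group) (S : G -> Prop) (m : nat)
    (f : ('I_m -> int) -> G) : Prop :=
  exists K C : Rdefinitions.R, 1 <= K /\ 0 <= C /\
    forall (x y : 'I_m -> int) (n : nat), cay_dist S (f x) (f y) n ->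
      (l1_dist x y)%:R / K - C <= n%:R /\ n%:R <= K * (l1_dist x y)%:R + C.

From mathcomp Require Import all_boot all_order all_algebra.
From mathcomp Require Import Rstruct lra.
From Stdlib Require Import Classical.
Import Order.TTheory GRing.Theory Num.Theory.
Local Open Scope ring_scope.
Set Implicit Arguments. Unset Strict Implicit.

(** Linear independence gives points [g_1, ..., g_m] of [G] whose evaluation
matrix [(q_i (g_l))] is invertible; the embedding is
[z |-> g_1^(z_1) * ... * g_m^(z_m)].  It is Lipschitz because each [g_l] is
a word in [S] and conjugation invariance of [S] lets the factors be changed
one at a time at cost [|y_l - x_l|].  Conversely each [q_i] is bounded on
[S], hence grows at most linearly along a path in the Cayley graph, while by
homogeneity [q_i] of the image of [z] is [sum_l z_l q_i (g_l)] up to a bounded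
error; inverting the evaluation matrix bounds [|y - x|_1] linearly by the
distance between the images of [x] and [y]. *)

Local Notation R := Rdefinitions.R.
Local Notation "x * y" := (gmul x y) : group_scope.
Local Notation "1" := (gone _) : group_scope.

Section GroupTheory.
Variable G : group.
Local Open Scope group_scope.

Lemma ginv_uniq (x y : G) : x * y = 1 -> ginv x = y.
Proof. by move=> xy1; rewrite -[ginv x]gmulg1 -xy1 gmulA gmulVg gmul1g. Qed.

Lemma ginvM (x y : G) : ginv (x * y) = ginv y * ginv x.
Proof. by apply: ginv_uniq; rewrite gmulA -[x * y * ginv y]gmulA gmulgV gmulg1 gmulgV. Qed.

Lemma ginvK (x : G) : ginv (ginv x) = x.
Proof. by apply: ginv_uniq; rewrite gmulVg. Qed.

Lemma gmulVK (x y : G) : x * ginv y * y = x.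
Proof. by rewrite -gmulA gmulVg gmulg1. Qed.

Lemma gpownSr (g : G) n : gpown g n.+1 = gpown g n * g.
Proof.
elim: n => [|n IH]; first by rewrite /gpown /= gmulg1 gmul1g.
by rewrite -[LHS]/(g * gpown g n.+1) {1}IH gmulA.
Qed.

Lemma gpowzS (g : G) (k : int) : gpowz g (k + 1) = g * gpowz g k.
Proof.
case: k => [n|[|n]]; first by rewrite /= addn1.
  by rewrite /= gmulg1 gmulgV.
have -> : (Negz n.+1 + 1 = Negz n)%R by rewrite !NegzE -addn1 PoszD opprD addrK.
change (ginv (gpown g n.+1) = g * ginv (gpown g n.+2)).
by rewrite (gpownSr g n.+1) ginvM gmulA gmulgV gmul1g.
Qed.

Lemma gpowzD (g : G) (k l : int) : gpowz g (k + l) = gpowz g k * gpowz g l.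
Proof.
have gpowzN1 j : gpowz g (j - 1) = ginv g * gpowz g j.
  by rewrite -[in RHS](subrK 1%R j) gpowzS gmulA gmulVg gmul1g.
elim/int_rec: k => [|k IH|k IH].
- by rewrite add0r gmul1g.
- by rewrite -addn1 PoszD addrAC !gpowzS IH gmulA.
- by rewrite -addn1 PoszD opprD addrAC !gpowzN1 IH gmulA.
Qed.

End GroupTheory.

Section Walks.
Variables (G : group) (S : G -> Prop).
Local Open Scope group_scope.

Lemma walk_mulr n (g h a : G) : walk S n g h -> walk S n (g * a) (h * a).
Proof.
elim=> [x|k x y s _ IH Ss|k x y s _ IH Ss]; first exact: walk0.
  by rewrite -gmulA; apply: walkF.
by rewrite -gmulA; apply: walkB.
Qed.

Lemma walk_cat n k (g h l : G) : walk S n g h -> walk S k h l -> walk S (n + k) g l.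
Proof.
move=> W1 W2; elim: W2 W1 => [x|j x y s _ IH Ss|j x y s _ IH Ss] W1.
- by rewrite addn0.
- by rewrite addnS; apply: walkF => //; apply: IH.
- by rewrite addnS; apply: walkB => //; apply: IH.
Qed.

Lemma walk_rev n (g h : G) : walk S n g h -> walk S n h g.
Proof.
elim=> [x|k x y s _ IH Ss|k x y s _ IH Ss]; first exact: walk0.
  have back : walk S 1 (s * y) y.
    by have := walkB (walk0 S (s * y)) Ss; rewrite gmulA gmulVg gmul1g.
  by rewrite -add1n; apply: walk_cat back IH.
have back : walk S 1 (ginv s * y) y.
  by have := walkF (walk0 S (ginv s * y)) Ss; rewrite gmulA gmulgV gmul1g.
by rewrite -add1n; apply: walk_cat back IH.
Qed.

Lemma walk_pow n (g : G) (k : int) :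
  walk S n 1 g -> walk S (`|k|%N * n) 1 (gpowz g k).
Proof.
move=> W.
have Wn j : walk S (j * n) 1 (gpown g j).
  elim: j => [|j IH]; first exact: walk0.
  rewrite mulSn gpownSr; apply: walk_cat W _.
  by have := walk_mulr g IH; rewrite gmul1g.
case: k => j; first exact: Wn.
by have := walk_mulr (ginv (gpown g j.+1)) (walk_rev (Wn j.+1)); rewrite gmulgV gmul1g.
Qed.

Hypothesis S_conj : conj_invariant S.

Lemma walk_conj n (g h a : G) :
  walk S n g h -> walk S n (a * g * ginv a) (a * h * ginv a).
Proof.
elim=> [x|k x y s _ IH Ss|k x y s _ IH Ss]; first exact: walk0.
  have -> : a * (s * y) * ginv a = (a * s * ginv a) * (a * y * ginv a).
    by rewrite !gmulA gmulVK.
  by apply: walkF => //; apply: S_conj.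
have -> : a * (ginv s * y) * ginv a = ginv (a * s * ginv a) * (a * y * ginv a).
  by rewrite !ginvM ginvK !gmulA gmulVK.
by apply: walkB => //; apply: S_conj.
Qed.

Lemma walk_mull n (g h a : G) : walk S n g h -> walk S n (a * g) (a * h).
Proof. by move/(walk_conj a)/(walk_mulr a); rewrite !gmulVK. Qed.

End Walks.

Section HomogeneousQuasiMorphism.
Variables (G : group) (phi : G -> R) (D : R).
Hypothesis phi_hom : homogeneous phi.
Hypothesis phi_defect : forall g h : G, `|phi (gmul g h) - phi g - phi h| <= D.

Lemma hqm1 : phi (gone G) = 0.
Proof. by have := phi_hom (gone G) 0; rewrite mul0r. Qed.

Lemma hqmV (x : G) : phi (ginv x) = - phi x.
Proof. by have := phi_hom x (-1); rewrite /= /gpown /= gmulg1 mulN1r. Qed.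

Lemma hqm_normM (g h : G) : `|phi (gmul g h)| <= `|phi g| + `|phi h| + D.
Proof.
have -> : phi (gmul g h) = (phi (gmul g h) - phi g - phi h) + (phi g + phi h) by lra.
apply: le_trans (ler_normD _ _) _.
by have := ler_normD (phi g) (phi h); have := phi_defect g h; lra.
Qed.

Variables (S : G -> Prop) (B : R).
Hypothesis phi_bounded : forall s, S s -> `|phi s| <= B.

Lemma hqm_walk n (g h : G) : walk S n g h -> `|phi (gmul h (ginv g))| <= n%:R * (B + D).
Proof.
elim=> [x|k x y s _ IH Ss|k x y s _ IH Ss].
- by rewrite gmulgV hqm1 normr0 mul0r.
- rewrite -gmulA; apply: le_trans (hqm_normM _ _) _.
  by rewrite -addn1 natrD mulrDl mul1r; have := phi_bounded Ss; lra.
- rewrite -gmulA; apply: le_trans (hqm_normM _ _) _.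
  by rewrite hqmV normrN -addn1 natrD mulrDl mul1r; have := phi_bounded Ss; lra.
Qed.

End HomogeneousQuasiMorphism.

Section Words.
Variables (G : group) (I : Type) (gen : I -> G).

Definition word (s : seq I) (z : I -> int) : G :=
  foldr (fun i w => gmul (gpowz (gen i) (z i)) w) (gone G) s.

Lemma word_walk (S : G -> Prop) (L : I -> nat) :
  conj_invariant S -> (forall i, walk S (L i) (gone G) (gen i)) ->
  forall s x y, walk S (\sum_(i <- s) `|y i - x i|%N * L i) (word s x) (word s y).
Proof.
move=> S_conj genL; elim=> [|i s IH] x y /=; first by rewrite big_nil; apply: walk0.
rewrite big_cons; apply: walk_cat (walk_mull S_conj _ (IH x y)).
have := walk_mulr (gmul (gpowz (gen i) (x i)) (word s x)) (walk_pow (y i - x i) (genL i)).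
by rewrite distnC gmul1g gmulA -gpowzD subrK.
Qed.

Variables (phi : G -> R) (D : R).
Hypothesis phi_hom : homogeneous phi.
Hypothesis phi_defect : forall g h : G, `|phi (gmul g h) - phi g - phi h| <= D.

Lemma hqm_word s z :
  `|phi (word s z) - \sum_(i <- s) (z i)%:~R * phi (gen i)| <= (size s)%:R * D.
Proof.
elim: s => [|i s IH] /=; first by rewrite big_nil hqm1 // subr0 normr0 mul0r.
rewrite big_cons -add1n natrD mulrDl mul1r.
move: (phi_defect (gpowz (gen i) (z i)) (word s z)) IH; rewrite phi_hom.
by rewrite !ler_norml => /andP[? ?] /andP[? ?]; apply/andP; split; lra.
Qed.

Variables (S : G -> Prop) (B : R).
Hypothesis phi_bounded : forall s, S s -> `|phi s| <= B.

Lemma hqm_word_dist n s x y : walk S n (word s x) (word s y) ->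
  `|\sum_(i <- s) (y i - x i)%:~R * phi (gen i)|
    <= n%:R * (B + D) + (2 * size s + 1)%:R * D.
Proof.
move=> /(hqm_walk phi_hom phi_defect phi_bounded).
have := hqm_word s y; have := hqm_word s x.
have := phi_defect (word s y) (ginv (word s x)); rewrite hqmV //.
have -> : \sum_(i <- s) (y i - x i)%:~R * phi (gen i)
    = \sum_(i <- s) (y i)%:~R * phi (gen i) - \sum_(i <- s) (x i)%:~R * phi (gen i).
  by rewrite -sumrB; apply: eq_bigr => i _; rewrite intrB mulrBl.
rewrite natrD natrM mulrDl mul1r !ler_norml.
by move=> /andP[? ?] /andP[? ?] /andP[? ?] /andP[? ?]; apply/andP; split; lra.
Qed.

End Words.

Section LinearIndependence.
Variables (X : Type) (m : nat) (q : 'I_m -> X -> R).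
Hypothesis q_lin : linearly_independent q.

Definition sample_mx n (h : 'I_n -> X) : 'M[R]_(n, m) := \matrix_(a, i) q i (h a).
Definition sample_row (x : X) : 'rV[R]_m := \row_i q i x.

Lemma sample_row_notin n (A : 'M[R]_(n, m)) :
  (\rank A < m)%N -> exists x, ~~ (sample_row x <= A)%MS.
Proof.
(* A nonzero column of [cokermx A] would be a vanishing combination of the [q_i]. *)
move=> rkA; apply: NNPP => all_in.
have sub x : (sample_row x <= A)%MS.
  by apply: NNPP => x_notin; apply: all_in; exists x; apply/negP.
have : cokermx A != 0 by rewrite -mxrank_eq0 mxrank_coker subn_eq0 -ltnNge.
case/matrix0Pn => i0 [j nz].
suff /q_lin/(_ i0) c0 : forall x, \sum_(i < m) cokermx A i j * q i x = 0.
  by rewrite c0 eqxx in nz.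
move=> x; have /submxP [C eqC] := sub x.
transitivity ((sample_row x *m cokermx A) 0 j).
  by rewrite mxE; apply: eq_bigr => i _; rewrite [sample_row x 0 i]mxE mulrC.
by rewrite eqC -mulmxA mulmx_coker mulmx0 mxE.
Qed.

Lemma sample_rank_geq k : (k <= m)%N ->
  exists n (h : 'I_n -> X), (k <= \rank (sample_mx h))%N.
Proof.
elim: k => [|k IH] km.
  have h0 : 'I_0 -> X by case.
  by exists 0%N, h0.
have [n [h rk_h]] := IH (ltnW km).
have [rk_big|rk_small] := leqP k.+1 (\rank (sample_mx h)); first by exists n, h.
have [x x_notin] : exists x, ~~ (sample_row x <= sample_mx h)%MS.
  by apply: sample_row_notin; apply: leq_ltn_trans km; rewrite -ltnS.
pose h' (a : 'I_(n + 1)) := match split a with inl a => h a | inr _ => x end.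
exists (n + 1)%N, h'.
have -> : sample_mx h' = col_mx (sample_mx h) (sample_row x).
  by apply/matrixP => a i; rewrite !mxE /h'; case: (split a) => b; rewrite !mxE.
have grows : (sample_mx h < col_mx (sample_mx h) (sample_row x))%MS.
  have := submx_refl (col_mx (sample_mx h) (sample_row x)).
  rewrite col_mx_sub => /andP[sub_h _].
  by rewrite ltmxE sub_h /= col_mx_sub negb_and x_notin orbT.
by apply: leq_trans (rank_ltmx grows); rewrite ltnS.
Qed.

Lemma sample_dual : exists (h : 'I_m -> X) (N : 'M[R]_m),
  forall j l, \sum_i N j i * q i (h l) = (j == l)%:R.
Proof.
have [n [h rk_h]] := sample_rank_geq (leqnn m).
have full : row_full (sample_mx h) by rewrite /row_full eqn_leq rank_leq_col.
pose f := fullrankfun full.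
have unit_tr : (rowsub f (sample_mx h))^T \in unitmx.
  by rewrite unitmx_tr fullrowsub_unit.
exists (fun k => h (f k)), (invmx (rowsub f (sample_mx h))^T) => j l.
have := mulVmx unit_tr; move/matrixP/(_ j l); rewrite !mxE => <-.
by apply: eq_bigr => i _; rewrite !mxE.
Qed.

Lemma lin_indep_coef_bound : exists (h : 'I_m -> X) (M : R), 0 <= M /\
  forall (c : 'I_m -> R) (e : R),
    (forall i, `|\sum_l c l * q i (h l)| <= e) -> \sum_j `|c j| <= M * e.
Proof.
have [h [N dualN]] := sample_dual.
exists h, (\sum_j \sum_i `|N j i|); split.
  by apply: sumr_ge0 => j _; apply: sumr_ge0.
move=> c e c_small; rewrite mulr_suml; apply: ler_sum => j _.
have -> : c j = \sum_i N j i * \sum_l c l * q i (h l).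
  under eq_bigr => i _ do rewrite mulr_sumr.
  under eq_bigr => i _ do under eq_bigr => l _ do rewrite mulrCA.
  rewrite exchange_big /=; under eq_bigr => l _ do rewrite -mulr_sumr dualN.
  rewrite (bigD1 j) //= eqxx mulr1 big1 ?addr0 // => l ne_lj.
  by rewrite eq_sym (negbTE ne_lj) mulr0.
rewrite mulr_suml; apply: le_trans (ler_norm_sum _ _ _) _.
by apply: ler_sum => i _; rewrite normrM ler_wpM2l.
Qed.

End LinearIndependence.

Lemma exists_common_bound (I : finType) (P : I -> R -> Prop) :
  (forall i b b', b <= b' -> P i b -> P i b') -> (forall i, exists b, P i b) ->
  exists b, 0 <= b /\ forall i, P i b.
Proof.
move=> P_mono /fin_all_exists [f Pf]; exists (\sum_i `|f i|).
split=> [|i]; first exact: sumr_ge0.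
apply: P_mono (Pf i); apply: le_trans (ler_norm _) _.
by rewrite (bigD1 i) //= lerDl sumr_ge0.
Qed.

Lemma l1_distE m (x y : 'I_m -> int) :
  (l1_dist x y)%:R = \sum_j `|(y j - x j)%:~R : R|.
Proof.
rewrite /l1_dist natr_sum; apply: eq_bigr => j _.
by rewrite distnC natr_absz intr_norm.
Qed.

Lemma qi_embedding_of_bounds (G : group) (S : G -> Prop) m
    (f : ('I_m -> int) -> G) (a b c : R) :
  0 <= a -> 0 <= b -> 0 <= c ->
  (forall x y n, cay_dist S (f x) (f y) n ->
     n%:R <= a * (l1_dist x y)%:R /\ (l1_dist x y)%:R <= b * n%:R + c) ->
  qi_embedding S f.
Proof.
move=> a0 b0 c0 bounds; exists (1 + a + b), c; split; first lra; split; first lra.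
move=> x y n /bounds[up low].
have l0 : 0 <= ((l1_dist x y)%:R : R) by [].
have n0 : 0 <= (n%:R : R) by [].
split; last by nra.
by rewrite lerBlDr ler_pdivrMr; nra.
Qed.

Theorem mainTheorem1 (G : group) (S : G -> Prop) (m : nat) (q : 'I_m -> G -> Rdefinitions.R) :
  conj_invariant S -> generates S ->
  (forall i, quasi_morphism (q i) /\ homogeneous (q i)) ->
  linearly_independent q ->
  (forall i, exists B : Rdefinitions.R, forall s : G, S s -> `|q i s| <= B) ->
  exists f : ('I_m -> int) -> G, qi_embedding S f.
Proof.
move=> S_conj S_gen q_hqm q_lin q_loc_bdd.
have [gen [M [M0 coef_bound]]] := lin_indep_coef_bound q_lin.
have [L genL] := fin_all_exists (fun i => S_gen (gen i)).
have [D [D0 q_defect]] : exists D, 0 <= D /\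
    forall i g h, `|q i (gmul g h) - q i g - q i h| <= D.
  apply: exists_common_bound => [i b b' bb' qb g h|i]; last exact: (q_hqm i).1.
  exact: le_trans (qb g h) bb'.
have [B [B0 q_bdd]] : exists B, 0 <= B /\ forall i s, S s -> `|q i s| <= B.
  apply: exists_common_bound => [i b b' bb' qb s Ss|]; last exact: q_loc_bdd.
  exact: le_trans (qb s Ss) bb'.
exists (word gen (enum 'I_m)).
apply: (@qi_embedding_of_bounds _ _ _ _ (\max_i L i)%:R (M * (B + D))
          (M * ((2 * m + 1)%:R * D))); rewrite ?mulr_ge0 ?addr_ge0 //.
move=> x y n [Wn n_min]; split.
- rewrite -natrM ler_nat mulnC /l1_dist big_distrl.
  apply: leq_trans (n_min _ (word_walk S_conj genL _ x y)) _.
  rewrite big_enum; apply: leq_sum => i _; rewrite distnC leq_mul //.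
  exact: (@leq_bigmax _ (fun i : 'I_m => L i) i).
- rewrite l1_distE -mulrA [_ * n%:R]mulrC -mulrDr; apply: coef_bound => i.
  have := hqm_word_dist (q_hqm i).2 (q_defect i) (q_bdd i) Wn.
  by rewrite size_enum_ord big_enum.
Qed.
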